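(* Let $E$ be a finite set and let $\omega:2^E\to[0,\infty)$ be Rayleigh. Then $\omega$ is logarithmically submodular: for all $S,T\subseteq E$, $\omega(S)\omega(T)\ge\omega(S\cap T)\,\omega(S\cup T)$.
   Context: For $\omega:2^E\to[0,\infty)$ not identically zero, let $Z(\omega;\mathbf{y})=\sum_{S\subseteq E}\omega(S)\prod_{e\in S}y_e$ in commuting indeterminates $\mathbf{y}=\{y_e:e\in E\}$. Write $Z_e=\partial Z/\partial y_e$, $Z_{ef}=\partial^2Z/\partial y_e\partial y_f$ and $\Delta Z\{e,f\}=Z_eZ_f-Z_{ef}Z$. $\omega$ is Rayleigh if $\Delta Z\{e,f\}(\mathbf{y})\ge0$ for all distinct $e,f\in E$ and all $\mathbf{y}$ with all $y_c>0$. *)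

From mathcomp Require Import all_boot all_order all_algebra.
From mathcomp Require Import mpoly.
From mathcomp Require Import reals.
Set Implicit Arguments. Unset Strict Implicit. Unset Printing Implicit Defensive.
Import Order.TTheory GRing.Theory Num.Theory.
Local Open Scope ring_scope.

(* The ground set E is represented as 'I_n (an arbitrary finite set, labelled). *)

Definition genpoly (R : realType) (n : nat) (omega : {set 'I_n} -> R)
  : {mpoly R[n]} :=
  \sum_(S : {set 'I_n}) omega S *: \prod_(e in S) 'X_e.

Definition DeltaZ (R : realType) (n : nat) (omega : {set 'I_n} -> R)
  (e f : 'I_n) : {mpoly R[n]} :=
  let Z := genpoly omega in
  Z^`M(e) * Z^`M(f) - (Z^`M(e))^`M(f) * Z.

Definition rayleigh (R : realType) (n : nat) (omega : {set 'I_n} -> R) : Prop :=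
  (forall S, 0 <= omega S) /\ (exists S, omega S != 0) /\
  forall (e f : 'I_n), e != f ->
    forall y : 'I_n -> R, (forall c, 0 < y c) -> 0 <= (DeltaZ omega e f).@[y].

(* The generating polynomial Z is affine in each variable separately, so for
   e != f, writing only the e- and f-coordinates,

     Z(s,q) Z(r,p) - Z(s,p) Z(r,q) = - DeltaZ{e,f} (s - r) (q - p).

   The Rayleigh property thus says that Z is log-submodular in every pair of
   coordinates, and changing one coordinate at a time upgrades this to
   Z(y \max z) Z(y \min z) <= Z(y) Z(z) on the positive orthant.  At the point
   that is t on X and t^-(n+1) off X, Z equals omega(X) t^|X| up to an error
   O(t^(|X|-1)); these points for S and T have join and meet the points for
   S :|: T and S :&: T, and t -> oo gives the inequality for omega. *)

From mathcomp Require Import all_boot all_order all_algebra.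
From mathcomp Require Import mpoly.
From mathcomp Require Import reals.
From mathcomp Require Import ring lra.
From Stdlib Require Import FunctionalExtensionality.
Import Order.TTheory GRing.Theory Num.Theory.
Local Open Scope ring_scope.
Set Implicit Arguments. Unset Strict Implicit.

Section CoordinateUpdates.
Variables (T : Type) (n : nat).
Implicit Types (y z : 'I_n -> T) (e : 'I_n).

Definition upd y e x (c : 'I_n) : T := if c == e then x else y c.

Lemma upd_id y e : upd y e (y e) = y.
Proof. by apply: functional_extensionality => c; rewrite /upd; case: eqP => [-> |]. Qed.

Lemma upd_upd y e x x' : upd (upd y e x) e x' = upd y e x'.
Proof. by apply: functional_extensionality => c; rewrite /upd; case: eqP. Qed.

Definition mix k y z (c : 'I_n) : T := if (c < k)%N then z c else y c.

Lemma mix0 y z : mix 0 y z = y.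
Proof. by apply: functional_extensionality => c; rewrite /mix ltn0. Qed.

Lemma mix_ord y z : mix n y z = z.
Proof. by apply: functional_extensionality => c; rewrite /mix ltn_ord. Qed.

Lemma mixS k (kn : (k < n)%N) y z :
  mix k.+1 y z = upd (mix k y z) (Ordinal kn) (z (Ordinal kn)).
Proof.
apply: functional_extensionality => c; rewrite /upd /mix ltnS leq_eqVlt.
have [-> | ck] := eqVneq c (Ordinal kn); first by rewrite eqxx.
by have /negbTE -> : nat_of_ord c != k by apply: contra ck => /eqP ck; apply/eqP/val_inj.
Qed.

Lemma mix_at k (kn : (k < n)%N) y z : mix k y z (Ordinal kn) = y (Ordinal kn).
Proof. by rewrite /mix ltnn. Qed.

End CoordinateUpdates.

Lemma ler_pdiv_cross (R : numFieldType) (a b c d : R) : 0 < b -> 0 < d ->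
  (a / d <= c / b) = (a * b <= c * d).
Proof. by move=> b_gt0 d_gt0; rewrite ler_pdivrMr // mulrAC ler_pdivlMr. Qed.

Section PairwiseToGlobal.
Variables (R : realFieldType) (n : nat) (F : ('I_n -> R) -> R).
Hypothesis F_gt0 : forall y, (forall c, 0 < y c) -> 0 < F y.
Hypothesis F_logsubmod2 : forall e f u r s p q, e != f -> (forall c, 0 < u c) ->
  0 < r <= s -> 0 < p <= q ->
  F (upd (upd u f q) e s) * F (upd (upd u f p) e r)
  <= F (upd (upd u f p) e s) * F (upd (upd u f q) e r).

Lemma upd_gt0 (y : 'I_n -> R) e x :
  (forall c, 0 < y c) -> 0 < x -> forall c, 0 < upd y e x c.
Proof. by move=> y_gt0 x_gt0 c; rewrite /upd; case: eqP. Qed.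

Lemma mix_gt0 k (y z : 'I_n -> R) :
  (forall c, 0 < y c) -> (forall c, 0 < z c) -> forall c, 0 < mix k y z c.
Proof. by move=> y_gt0 z_gt0 c; rewrite /mix; case: ifP. Qed.

Lemma ratio_antitone e u v r s : (forall c, 0 < u c) -> (forall c, u c <= v c) ->
  0 < r <= s ->
  F (upd v e s) / F (upd v e r)
  <= F (upd u e s) / F (upd u e r).
Proof.
move=> u_gt0 uv rs; have /andP[r_gt0 _] := rs.
have v_gt0 c : 0 < v c by apply: lt_le_trans (uv c).
pose ratio y := F (upd y e s) / F (upd y e r).
suff: forall k, (k <= n)%N -> ratio (mix k u v) <= ratio u by move/(_ n); rewrite mix_ord; apply.
elim=> [|k IH] kn; first by rewrite mix0.
apply: le_trans (IH (ltnW kn)); rewrite /ratio (mixS kn).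
set f := Ordinal kn; set m := mix k u v.
have [<- | ef] := eqVneq e f; first by rewrite !upd_upd.
have := F_logsubmod2 (p := m f) (q := v f) ef (mix_gt0 k u_gt0 v_gt0) rs.
have mf : m f = u f := mix_at kn u v.
rewrite upd_id mf uv u_gt0 => /(_ isT) le_cross.
have m_gt0 : forall c, 0 < m c := mix_gt0 k u_gt0 v_gt0.
have m'_gt0 : forall c, 0 < upd m f (v f) c := upd_gt0 f m_gt0 (v_gt0 f).
by rewrite ler_pdiv_cross //; apply: F_gt0; apply: upd_gt0.
Qed.

Lemma pairwise_logsubmod y z : (forall c, 0 < y c) -> (forall c, 0 < z c) ->
  F (y \max z) * F (y \min z) <= F y * F z.
Proof.
move=> y_gt0 z_gt0.
have max_gt0 c : 0 < (y \max z) c by rewrite /= lt_max y_gt0.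
have min_gt0 c : 0 < (y \min z) c by rewrite /= lt_min y_gt0 z_gt0.
have telescope (x a b : R) : 0 < a -> x / a * (a / b) = x / b.
  by move=> a_gt0; rewrite mulrA divfK ?gt_eqF.
(* Both A k and B k raise coordinate c < k from z c to y c exactly when
   z c < y c, and B k <= A k, so each step is an instance of ratio_antitone. *)
pose A k := mix k z (y \max z); pose B k := mix k (y \min z) y.
suff: forall k, (k <= n)%N -> F (A k) / F z <= F (B k) / F (y \min z).
  by move/(_ n (leqnn n)); rewrite /A /B !mix_ord ler_pdiv_cross ?F_gt0.
elim=> [|k IH] kn; first by rewrite /A /B !mix0 !divff ?gt_eqF ?F_gt0.
rewrite /A /B !(mixS kn); set f := Ordinal kn.
set a := mix k z _; set b := mix k _ y.
have af : a f = z f := mix_at kn _ _.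
have bf : b f = Num.min (y f) (z f) := mix_at kn _ _.
have a_gt0 : forall c, 0 < a c := mix_gt0 k z_gt0 max_gt0.
have b_gt0 : forall c, 0 < b c := mix_gt0 k min_gt0 y_gt0.
have [yz | zy] := leP (y f) (z f).
  rewrite /= (max_r yz) -af upd_id -[y f](min_l yz) -bf upd_id.
  exact: IH (ltnW kn).
have ba c : b c <= a c.
  rewrite /b /a /mix; case: ifP => _ /=; [by rewrite le_max lexx | by rewrite ge_min lexx orbT].
have Ea : upd a f (z f) = a by rewrite -af upd_id.
have Eb : upd b f (z f) = b by rewrite -[z f](min_r (ltW zy)) -bf upd_id.
have := ratio_antitone f b_gt0 ba (r := z f) (s := y f).
rewrite Ea Eb z_gt0 (ltW zy) => /(_ isT) step.
rewrite /= (max_l (ltW zy)) -[X in X <= _](telescope _ (F a)) ?F_gt0 //.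
rewrite -[X in _ <= X](telescope _ (F b)) ?F_gt0 //.
by apply: ler_pM step (IH (ltnW kn)); rewrite divr_ge0 ?ltW ?F_gt0 //; apply: upd_gt0.
Qed.

End PairwiseToGlobal.

Section GeneratingFunction.
Variables (R : comPzRingType) (n : nat).
Implicit Types (w : {set 'I_n} -> R) (y u : 'I_n -> R) (e f : 'I_n).

Definition Zval w y := \sum_(U : {set 'I_n}) w U * \prod_(c in U) y c.

Definition delete e w (V : {set 'I_n}) := if e \in V then 0 else w V.
Definition contract e w (V : {set 'I_n}) := if e \in V then 0 else w (e |: V).

Definition avoids e w := forall V : {set 'I_n}, e \in V -> w V = 0.

Lemma avoids_delete e w : avoids e (delete e w).
Proof. by rewrite /delete => V ->. Qed.

Lemma avoids_contract e w : avoids e (contract e w).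
Proof. by rewrite /contract => V ->. Qed.

Lemma avoidsW_delete e f w : avoids e w -> avoids e (delete f w).
Proof. by move=> we V eV; rewrite /delete we //; case: ifP. Qed.

Lemma avoidsW_contract e f w : avoids e w -> avoids e (contract f w).
Proof. by move=> we V eV; rewrite /contract we ?inE ?eV ?orbT //; case: ifP. Qed.

Lemma contractC e f w : contract e (contract f w) = contract f (contract e w).
Proof.
apply: functional_extensionality => V; rewrite /contract !inE.
case: (eqVneq e f) => [-> // | ef].
by case: (e \in V); case: (f \in V) => //=; rewrite setUCA.
Qed.

Lemma delete_contractC e f w :
  e != f -> delete e (contract f w) = contract f (delete e w).
Proof.
move=> ef; apply: functional_extensionality => V; rewrite /contract /delete !inE.
by rewrite (negbTE ef); case: (e \in V); case: (f \in V).
Qed.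

Lemma reindex_setU1 e (F : {set 'I_n} -> R) :
  \sum_(U : {set 'I_n} | e \in U) F U = \sum_(V : {set 'I_n} | e \notin V) F (e |: V).
Proof.
rewrite (reindex_onto (fun V => e |: V) (fun U => U :\ e)) /=; last first.
  by move=> U eU; rewrite setD1K.
apply: eq_bigl => V; rewrite setU11 /=.
apply/eqP/idP => [<- | eV]; [by rewrite !inE eqxx | by rewrite setU1K].
Qed.

Lemma Zval_split e w y :
  Zval w y = Zval (delete e w) y + y e * Zval (contract e w) y.
Proof.
pose hasE := [pred U : {set 'I_n} | e \in U].
rewrite /Zval [LHS](bigID hasE) [X in _ = X + _](bigID hasE) [X in _ = _ + _ * X](bigID hasE) /=.
rewrite [in X in _ = X + _]big1 => [|U eU]; last by rewrite /delete eU mul0r.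
rewrite [in X in _ = _ + _ * X]big1 => [|U eU]; last by rewrite /contract eU mul0r.
rewrite !add0r addrC reindex_setU1 mulr_sumr; congr (_ + _).
  by apply: eq_bigr => U /negbTE eU; rewrite /delete eU.
apply: eq_bigr => V /negbTE eV; rewrite /contract eV (bigD1 e) ?setU11 //= mulrCA.
congr (_ * (_ * _)); apply: eq_bigl => c; rewrite !inE.
by case: eqP => [-> | _]; rewrite ?eV ?andbT.
Qed.

Lemma Zval_split2 e f w y :
  Zval w y = Zval (delete f (delete e w)) y + y e * Zval (delete f (contract e w)) y
    + y f * Zval (contract f (delete e w)) y
    + y e * y f * Zval (contract f (contract e w)) y.
Proof.
by rewrite (Zval_split e) (Zval_split f (delete e w)) (Zval_split f (contract e w)); ring.
Qed.

Lemma eq_Zval_avoid2 e f w u v : avoids e w -> avoids f w ->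
  (forall c, c != e -> c != f -> v c = u c) -> Zval w v = Zval w u.
Proof.
move=> we wf vu; apply: eq_bigr => U _.
have [eU | eU] := boolP (e \in U); first by rewrite we // !mul0r.
have [fU | fU] := boolP (f \in U); first by rewrite wf // !mul0r.
congr (_ * _); apply: eq_bigr => c cU; apply: vu.
  by apply: contraNneq eU => <-.
by apply: contraNneq fU => <-.
Qed.

Lemma Zval_bilinear e f w u v : (forall c, c != e -> c != f -> v c = u c) ->
  Zval w v = Zval (delete f (delete e w)) u + v e * Zval (delete f (contract e w)) u
    + v f * Zval (contract f (delete e w)) u
    + v e * v f * Zval (contract f (contract e w)) u.
Proof.
move=> vu; rewrite (Zval_split2 e f) !(eq_Zval_avoid2 _ _ vu) //.
all: repeat match goal with
  | |- avoids ?e (delete ?e _) => exact: avoids_delete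
  | |- avoids ?e (contract ?e _) => exact: avoids_contract
  | |- avoids _ (delete _ _) => apply: avoidsW_delete
  | |- avoids _ (contract _ _) => apply: avoidsW_contract
  end.
Qed.

Definition DeltaZval w e f u :=
  Zval (contract e w) u * Zval (contract f w) u
  - Zval (contract f (contract e w)) u * Zval w u.

Lemma DeltaZvalE e f w u : e != f ->
  DeltaZval w e f u =
  Zval (delete f (contract e w)) u * Zval (contract f (delete e w)) u
  - Zval (delete f (delete e w)) u * Zval (contract f (contract e w)) u.
Proof.
move=> ef; rewrite /DeltaZval (Zval_split f (contract e w)) (Zval_split e (contract f w)).
by rewrite (delete_contractC _ ef) (contractC e f) (Zval_split2 e f w); ring.
Qed.

Lemma Zval_exchange e f w u r s p q : e != f ->
  Zval w (upd (upd u f p) e s) * Zval w (upd (upd u f q) e r)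
  - Zval w (upd (upd u f q) e s) * Zval w (upd (upd u f p) e r)
  = DeltaZval w e f u * ((s - r) * (q - p)).
Proof.
have agree x x' c : c != e -> c != f -> upd (upd u f x') e x c = u c.
  by move=> /negbTE ce /negbTE cf; rewrite /upd ce cf.
move=> ef; rewrite (DeltaZvalE _ _ ef) !(Zval_bilinear w (agree _ _)) /upd eqxx.
by rewrite eq_sym (negbTE ef) eqxx; ring.
Qed.
End GeneratingFunction.

Section ZvalOrder.
Variables (R : numDomainType) (n : nat).
Implicit Types (w : {set 'I_n} -> R) (y u : 'I_n -> R) (e f : 'I_n).

Lemma Zval_ge_term w X y : (forall S, 0 <= w S) -> (forall c, 0 <= y c) ->
  w X * \prod_(c in X) y c <= Zval w y.
Proof.
move=> w_ge0 y_ge0; rewrite /Zval (bigD1 X) //= lerDl.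
by apply: sumr_ge0 => U _; rewrite mulr_ge0 ?prodr_ge0.
Qed.

Lemma Zval_gt0 w y : (forall S, 0 <= w S) -> (exists S, w S != 0) ->
  (forall c, 0 < y c) -> 0 < Zval w y.
Proof.
move=> w_ge0 [X wX] y_gt0; apply: lt_le_trans (Zval_ge_term X w_ge0 (fun c => ltW (y_gt0 c))).
by rewrite mulr_gt0 ?prodr_gt0 // lt0r wX w_ge0.
Qed.

Lemma Zval_logsubmod2 w e f u r s p q : e != f -> 0 <= DeltaZval w e f u ->
  r <= s -> p <= q ->
  Zval w (upd (upd u f q) e s) * Zval w (upd (upd u f p) e r)
  <= Zval w (upd (upd u f p) e s) * Zval w (upd (upd u f q) e r).
Proof.
move=> ef Delta_ge0 rs pq; rewrite -subr_ge0 Zval_exchange //.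
by rewrite mulr_ge0 // mulr_ge0 // subr_ge0.
Qed.

End ZvalOrder.

Section GeneratingPolynomial.
Variables (R : realType) (n : nat).
Implicit Types (w : {set 'I_n} -> R) (e f : 'I_n).

Lemma meval_genpoly w y : (genpoly w).@[y] = Zval w y.
Proof.
rewrite /genpoly raddf_sum; apply: eq_bigr => U _ /=.
by rewrite mevalZ rmorph_prod; congr (_ * _); apply: eq_bigr => c _; exact: mevalXU.
Qed.

Lemma mderivXU e f : ('X_f : {mpoly R[n]})^`M(e) = (e == f)%:R%:MP.
Proof.
rewrite mderivX mnm1E; have [<- | ef] := eqVneq e f; last by rewrite scale0r.
rewrite (_ : (U_(e) - U_(e))%MM = 0%MM) ?mpolyX0 ?scale1r //.
by apply/mnmP => k; rewrite !mnmE subnn.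
Qed.

Lemma mderiv_prodX e (U : {set 'I_n}) :
  (\prod_(c in U) ('X_c : {mpoly R[n]}))^`M(e) =
  if e \in U then \prod_(c in U :\ e) 'X_c else 0.
Proof.
have mderiv_prod0 (P : pred 'I_n) : {in P, forall c, c != e} ->
    (\prod_(c | P c) ('X_c : {mpoly R[n]}))^`M(e) = 0.
  move=> Pe; apply: (big_rec (fun p : {mpoly R[n]} => p^`M(e) = 0)); first exact: mderivC.
  by move=> c p Pc dp; rewrite mderivM dp mderivXU eq_sym (negbTE (Pe c Pc)) mulr0 mul0r addr0.
case: ifP => eU; last by apply: mderiv_prod0 => c cU; apply: contraFneq eU => <-.
rewrite (bigD1 e) //= mderivM mderivXU eqxx mderiv_prod0 => [|c /andP[]//].
by rewrite mulr0 addr0 mul1r; apply: eq_bigl => c; rewrite !inE andbC.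
Qed.

Lemma mderiv_genpoly e w : (genpoly w)^`M(e) = genpoly (contract e w).
Proof.
rewrite /genpoly linear_sum /=.
under eq_bigr => U _ do rewrite mderivZ mderiv_prodX.
rewrite (bigID [pred U : {set 'I_n} | e \in U]) [RHS](bigID [pred U : {set 'I_n} | e \in U]) /=.
rewrite [in RHS]big1 => [|U eU]; last by rewrite /contract eU scale0r.
rewrite [X in _ + X]big1 => [|U /negbTE ->]; last by rewrite scaler0.
rewrite add0r addr0 reindex_setU1; apply: eq_bigr => V /negbTE eV.
by rewrite setU11 /contract eV setU1K ?eV.
Qed.

Lemma meval_DeltaZ w e f u : (DeltaZ w e f).@[u] = DeltaZval w e f u.
Proof. by rewrite /DeltaZ mevalB !mevalM !mderiv_genpoly !meval_genpoly. Qed.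

Lemma rayleigh_Zval_logsubmod w : rayleigh w ->
  forall y z : 'I_n -> R, (forall c, 0 < y c) -> (forall c, 0 < z c) ->
  Zval w (y \max z) * Zval w (y \min z) <= Zval w y * Zval w z.
Proof.
move=> [w_ge0 [w_nz w_rayleigh]] y z.
apply: pairwise_logsubmod => [x x_gt0 | e f u r s p q ef u_gt0]; first exact: Zval_gt0.
move=> /andP[_ rs] /andP[_ pq]; apply: Zval_logsubmod2 => //.
by rewrite -meval_DeltaZ; apply: w_rayleigh.
Qed.

End GeneratingPolynomial.

Section PeakPoints.
Variables (R : realFieldType) (n : nat).
Implicit Types (t : R) (X U : {set 'I_n}).

Definition peak t X (c : 'I_n) := if c \in X then t else (t ^+ n.+1)^-1.

Lemma peak_gt0 t X : 0 < t -> forall c, 0 < peak t X c.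
Proof. by move=> t_gt0 c; rewrite /peak; case: ifP; rewrite ?invr_gt0 ?exprn_gt0. Qed.

Lemma inv_exprn_le1 t : 1 <= t -> (t ^+ n.+1)^-1 <= 1.
Proof. by move=> t_ge1; rewrite invf_le1 ?exprn_ege1 ?exprn_gt0 ?(lt_le_trans ltr01). Qed.

Lemma peak_max t S T : 1 <= t -> peak t S \max peak t T = peak t (S :|: T).
Proof.
move=> t_ge1; have ept := le_trans (inv_exprn_le1 t_ge1) t_ge1.
apply: functional_extensionality => c; rewrite /= /peak inE.
by case: (c \in S); case: (c \in T); rewrite /= ?maxxx ?(max_l ept) ?(max_r ept).
Qed.

Lemma peak_min t S T : 1 <= t -> peak t S \min peak t T = peak t (S :&: T).
Proof.
move=> t_ge1; have ept := le_trans (inv_exprn_le1 t_ge1) t_ge1.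
apply: functional_extensionality => c; rewrite /= /peak inE.
by case: (c \in S); case: (c \in T); rewrite /= ?minxx ?(min_l ept) ?(min_r ept).
Qed.

Lemma prod_peak t X U :
  \prod_(c in U) peak t X c = t ^+ #|U :&: X| * (t ^+ n.+1)^-1 ^+ #|U :\: X|.
Proof.
rewrite (big_setID X) /= -!prodr_const; congr (_ * _); apply: eq_bigr => c.
  by rewrite inE /peak => /andP[_ ->].
by rewrite inE /peak => /andP[/negbTE ->].
Qed.

Lemma prod_peak_le t X U : 1 <= t -> U != X ->
  (\prod_(c in U) peak t X c) * t <= t ^+ #|X|.
Proof.
move=> t_ge1 UX; have t_gt0 := lt_le_trans ltr01 t_ge1.
rewrite prod_peak; have [UXe | /set0Pn [c cUX]] := eqVneq (U :\: X) set0.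
  have sUX : U \subset X by rewrite -setD_eq0 UXe.
  rewrite UXe cards0 expr0 mulr1 (setIidPl sUX) -exprSr ler_weXn2l //.
  by apply: proper_card; rewrite properEneq UX sUX.
have ep_ge0 : 0 <= (t ^+ n.+1)^-1 by rewrite invr_ge0 exprn_ge0 // ltW.
apply: (@le_trans _ _ (t ^+ n * (t ^+ n.+1)^-1 * t)).
  apply: ler_wpM2r; first exact: ltW.
  apply: ler_pM; rewrite ?exprn_ge0 //; first exact: ltW.
    apply: ler_weXn2l => //.
    by rewrite -[n in (_ <= n)%N]card_ord (leq_trans (subset_leq_card (subsetIr _ _))) ?max_card.
  rewrite -[leRHS]expr1; apply: ler_wiXn2l; rewrite ?inv_exprn_le1 //.
  by rewrite card_gt0; apply/set0Pn; exists c.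
by rewrite exprSr invfM mulrA mulfV ?mul1r ?mulVf ?gt_eqF ?exprn_gt0 // exprn_ege1.
Qed.

Lemma Zval_peak_ge w t X : 0 < t -> (forall S, 0 <= w S) ->
  w X * t ^+ #|X| <= Zval w (peak t X).
Proof.
move=> t_gt0 w_ge0; have := Zval_ge_term X w_ge0 (fun c => ltW (peak_gt0 X t_gt0 c)).
by rewrite prod_peak setIid setDv cards0 expr0 mulr1.
Qed.

Lemma Zval_peak_le w t X : 1 <= t -> (forall S, 0 <= w S) ->
  Zval w (peak t X) <= (w X + (\sum_U w U) / t) * t ^+ #|X|.
Proof.
move=> t_ge1 w_ge0; have t_gt0 := lt_le_trans ltr01 t_ge1.
rewrite /Zval (bigD1 X) //= prod_peak setIid setDv cards0 expr0 mulr1 mulrDl lerD2l.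
have K_ge0 : 0 <= t ^+ #|X| / t by rewrite divr_ge0 ?exprn_ge0 // ltW.
apply: (@le_trans _ _ (\sum_(U | U != X) w U * (t ^+ #|X| / t))).
  apply: ler_sum => U UX; apply: ler_wpM2l => //.
  by rewrite ler_pdivlMr // prod_peak_le.
rewrite -mulr_suml mulrAC -mulrA; apply: ler_wpM2r => //.
by rewrite [leRHS](bigD1 X) //= lerDr.
Qed.

End PeakPoints.

Lemma logsubmod_peak_bound (R : realFieldType) (n : nat) (w : {set 'I_n} -> R)
    (S T : {set 'I_n}) (t : R) :
  (forall X, 0 <= w X) ->
  (forall y z : 'I_n -> R, (forall c, 0 < y c) -> (forall c, 0 < z c) ->
    Zval w (y \max z) * Zval w (y \min z) <= Zval w y * Zval w z) ->
  1 <= t ->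
  w (S :&: T) * w (S :|: T)
  <= (w S + (\sum_U w U) / t) * (w T + (\sum_U w U) / t).
Proof.
move=> w_ge0 Zval_logsubmod t_ge1; have t_gt0 := lt_le_trans ltr01 t_ge1.
have t_ge0 := ltW t_gt0; set M := \sum_U w U.
rewrite -(ler_pM2r (exprn_gt0 (#|S| + #|T|) t_gt0)).
have -> : w (S :&: T) * w (S :|: T) * t ^+ (#|S| + #|T|)
    = (w (S :|: T) * t ^+ #|S :|: T|) * (w (S :&: T) * t ^+ #|S :&: T|).
  by rewrite -cardsUI exprD; ring.
have -> : (w S + M / t) * (w T + M / t) * t ^+ (#|S| + #|T|)
    = ((w S + M / t) * t ^+ #|S|) * ((w T + M / t) * t ^+ #|T|).
  by rewrite exprD; ring.
have Zval_peak_ge0 X : 0 <= Zval w (peak t X).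
  exact: le_trans (mulr_ge0 (w_ge0 X) (exprn_ge0 _ t_ge0)) (Zval_peak_ge _ t_gt0 w_ge0).
apply: le_trans (ler_pM _ _ (Zval_peak_ge _ t_gt0 w_ge0) (Zval_peak_ge _ t_gt0 w_ge0)) _;
  rewrite ?mulr_ge0 ?exprn_ge0 //.
rewrite -(peak_max _ _ t_ge1) -(peak_min _ _ t_ge1).
apply: le_trans (Zval_logsubmod _ _ (peak_gt0 S t_gt0) (peak_gt0 T t_gt0)) _.
by apply: ler_pM; rewrite ?Zval_peak_ge0 ?Zval_peak_le.
Qed.

Lemma le_mul_of_le_shifted (R : realFieldType) (a b c M : R) :
  0 <= a <= M -> 0 <= b <= M ->
  (forall t, 1 <= t -> c <= (a + M / t) * (b + M / t)) -> c <= a * b.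
Proof.
move=> /andP[a_ge0 aM] /andP[b_ge0 bM] c_le; apply/ler_addgt0Pr => eps eps_gt0.
have M_ge0 := le_trans a_ge0 aM.
pose t := 1 + 3 * M ^+ 2 / eps.
have t_ge1 : 1 <= t by rewrite lerDl divr_ge0 ?mulr_ge0 ?sqr_ge0 // ltW.
have t_gt0 := lt_le_trans ltr01 t_ge1.
apply: le_trans (c_le t t_ge1) _; set u := M / t.
have u_ge0 : 0 <= u by rewrite divr_ge0 // ltW.
have uM : u <= M by rewrite ler_pdivrMr // ler_peMr.
have Mu : 3 * M * u <= eps.
  have eps_t : eps * t = eps + 3 * M ^+ 2 by rewrite /t; field; rewrite gt_eqF.
  have -> : 3 * M * u = 3 * M ^+ 2 / t by rewrite /u; ring.
  by rewrite ler_pdivrMr // eps_t lerDr ltW.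
nra.
Qed.

Theorem theorem4p4 (R : realType) (n : nat) (omega : {set 'I_n} -> R) :
  rayleigh omega ->
  forall S T : {set 'I_n}, omega (S :&: T) * omega (S :|: T) <= omega S * omega T.
Proof.
move=> omega_rayleigh S T; have [omega_ge0 _] := omega_rayleigh.
have omega_le_sum X : 0 <= omega X <= \sum_U omega U.
  by rewrite omega_ge0 [leRHS](bigD1 X) //= lerDl sumr_ge0.
apply: le_mul_of_le_shifted (omega_le_sum S) (omega_le_sum T) _ => t t_ge1.
apply: logsubmod_peak_bound => //.
exact: rayleigh_Zval_logsubmod.
Qed.
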